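(* Let $k\ge 3$ be an integer. There is no deterministic wait-free algorithm that solves the consensus task for $2$ processes in the asynchronous shared-memory model using only atomic read-write registers and (any number of) $\text{WRN}_{k}$ objects.
   Context: A $\text{WRN}_{k}$ (Write and Read Next) object is a deterministic atomic shared object with a single operation $\texttt{WRN}(i,v)$, where $i\in\{0,\dots,k-1\}$ and $v\neq\bot$. Its state consists of $k$ values $A[0],\dots,A[k-1]$, initially all $\bot$; the operation $\texttt{WRN}(i,v)$ atomically sets $A[i]\gets v$ and returns $A[(i+1)\bmod k]$ (i.e. the value passed in the most recent previous invocation with index $(i+1)\bmod k$, or $\bot$ if there was none). Model: asynchronous processes communicate only by applying atomic operations (steps) to shared objects; any process may crash (stop taking steps). An algorithm is wait-free if every non-crashed process produces its output in a finite number of its own steps. Consensus task: each process has an input value and every non-faulty process must output a value such that (Validity) every output is the input of some process and (Agreement) all outputs are equal. *)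

From mathcomp Require Import all_boot.
Set Implicit Arguments. Unset Strict Implicit. Unset Printing Implicit Defensive.

(* Operations a process may apply to a shared object.
   [ORead r] reads register r; [OWrite r v] writes v into register r;
   [OWRN w i v] applies WRN(i, v) to the WRN_k object w (v <> bot is
   automatic: bot is [None], v is an element of V). *)
Inductive op (k : nat) (V R W : Type) : Type :=
| ORead of R
| OWrite of R & V
| OWRN of W & 'I_k & V.

(* Each process is a deterministic state machine: in local state s, process p
   either outputs a value ([inl o]) and stops, or applies an operation
   ([inr o]) and moves to [next p s resp] with the response [resp]. *)
Record algorithm (k : nat) (I : Type) := Algorithm {
  Val : Type;
  Reg : eqType;
  Wobj : eqType;
  reg_init : Reg -> Val;
  Loc : Type;
  init : 'I_2 -> I -> Loc;
  act : 'I_2 -> Loc -> I + op k Val Reg Wobj;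
  next : 'I_2 -> Loc -> option Val -> Loc
}.

Section Semantics.
Variables (k : nat) (I : Type) (A : algorithm k I).

(* shared memory: register contents, and the arrays A[0..k-1] of each WRN_k
   object (indexed by nat, only 0..k-1 used); [None] is bot. *)
Record mem := Mem { regs : Reg A -> Val A; wrns : Wobj A -> nat -> option (Val A) }.

Definition mem0 : mem := Mem (@reg_init _ _ A) (fun _ _ => None).

Definition apply_op (m : mem) (o : op k (Val A) (Reg A) (Wobj A)) : mem * option (Val A) :=
  match o with
  | ORead r => (m, Some (regs m r))
  | OWrite r v => (Mem (fun r' => if r' == r then v else regs m r') (wrns m), None)
  | OWRN w i v =>
      (Mem (regs m) (fun w' j => if (w' == w) && (j == nat_of_ord i) then Some v
                                 else wrns m w' j),
       wrns m w ((nat_of_ord i).+1 %% k))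
  end.

Record config := Config { locs : 'I_2 -> Loc A; cmem : mem }.

Definition init_config (inputs : 'I_2 -> I) : config :=
  Config (fun p => @init _ _ A p (inputs p)) mem0.

Definition step (c : config) (p : 'I_2) : config :=
  match @act _ _ A p (locs c p) with
  | inl _ => c
  | inr o =>
      let (m', resp) := apply_op (cmem c) o in
      Config (fun q => if q == p then @next _ _ A p (locs c p) resp else locs c q) m'
  end.

Fixpoint run (inputs : 'I_2 -> I) (sched : nat -> 'I_2) (t : nat) : config :=
  match t with
  | 0 => init_config inputs
  | t'.+1 => step (run inputs sched t') (sched t')
  end.

Definition decided (c : config) (p : 'I_2) (o : I) : Prop :=
  @act _ _ A p (locs c p) = inl o.

(* A solves 2-process consensus wait-free: in every execution (any inputs,
   any schedule; a process that crashes is one scheduled only finitely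
   often), every process that takes infinitely many steps eventually outputs
   (wait-freedom), all outputs are equal (agreement) and every output is the
   input of some process (validity). *)
Definition solves_consensus : Prop :=
  forall (inputs : 'I_2 -> I) (sched : nat -> 'I_2),
    (forall p : 'I_2, (forall t, exists t', t <= t' /\ sched t' = p) ->
       exists t o, decided (run inputs sched t) p o) /\
    (forall p q t t' o o', decided (run inputs sched t) p o ->
       decided (run inputs sched t') q o' -> o = o') /\
    (forall p t o, decided (run inputs sched t) p o -> exists q, o = inputs q).

End Semantics.

(* The bivalence argument of Fischer, Lynch and Paterson, as adapted by Herlihy.
   Call a configuration bivalent when two different decisions are still
   reachable from it.  With distinct inputs the initial configuration is
   bivalent, because a process running solo must decide its own input.  A
   reachable bivalent configuration always has a bivalent successor: otherwise
   both processes have pending operations, and when k >= 3 one of the two is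
   invisible to the other: performed just before it, it changes neither the
   other's response nor, once the two have commuted or the first has been
   overwritten, the memory.  A read is invisible to anything, and a write is
   invisible to a write or a WRN.  WRN(i, _) is invisible to WRN(j, _) unless
   the latter reads cell i, and both cannot read each other's cell because
   i + 1 = j and j + 1 = i (mod k) force k <= 2.  So the second process,
   running solo after both steps, cannot tell the two successors apart, and
   they share a decision value.  Always moving to a bivalent successor gives
   a schedule in which some process takes infinitely many steps but never
   decides, so the algorithm is not wait-free. *)

From Stdlib Require Import Classical ClassicalEpsilon FunctionalExtensionality.
From Pilot Require Import Defs.
From mathcomp Require Import all_boot zify.
Set Implicit Arguments. Unset Strict Implicit. Unset Printing Implicit Defensive.

Arguments ORead {k V R W}.
Arguments OWrite {k V R W}.
Arguments OWRN {k V R W}.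

Lemma succ_modE k i : i < k -> i.+1 %% k = if i.+1 == k then 0 else i.+1.
Proof.
by move=> lt_ik; case: eqP => [->|ne]; rewrite ?modnn // modn_small //; lia.
Qed.

Lemma succ_mod_asym k i j : 2 < k -> i < k -> j < k ->
  j.+1 %% k = i -> i.+1 %% k != j.
Proof.
by move=> k_gt2 lt_ik lt_jk; rewrite !succ_modE //; do 2![case: ifP => /eqP]; lia.
Qed.

Lemma mkseq_nth_nseq (T : Type) (x0 : T) s n :
  mkseq (nth x0 s) (size s + n) = s ++ nseq n x0.
Proof.
apply: (@eq_from_nth _ x0); first by rewrite size_mkseq size_cat size_nseq.
move=> i; rewrite size_mkseq => lt_i; rewrite nth_mkseq // nth_cat.
by case: ltnP => // le_si; rewrite nth_nseq nth_default // if_same.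
Qed.

Lemma ord2P (p : 'I_2) : p = ord0 \/ p = ord_max.
Proof. by case: p => [[|[|n]] lt_p2] //; [left|right]; apply: val_inj. Qed.

Section Memory.
Variables (k : nat) (I : Type) (A : algorithm k I).
Implicit Types (m : Defs.mem A) (o : op k (Val A) (Reg A) (Wobj A)).

Lemma mem_ext m1 m2 :
  regs m1 =1 regs m2 -> (forall w, wrns m1 w =1 wrns m2 w) -> m1 = m2.
Proof.
case: m1 m2 => [r1 w1] [r2 w2] /= eq_r eq_w.
rewrite (functional_extensionality _ _ eq_r); congr Defs.Mem.
apply: functional_extensionality => w; exact: functional_extensionality (eq_w w).
Qed.

Definition invisible m o o' :=
  let m_o := (apply_op m o).1 in
  ((apply_op m_o o').1 = (apply_op (apply_op m o').1 o).1 \/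
   (apply_op m_o o').1 = (apply_op m o').1) /\
  (apply_op m_o o').2 = (apply_op m o').2.

Lemma read_invisible m r o : invisible m (ORead r) o.
Proof. by split; [right|]. Qed.

Lemma write_invisible_write m r v r' v' :
  invisible m (OWrite r v) (OWrite r' v').
Proof.
split=> //; have [->|ne] := eqVneq r' r.
  by right; apply: mem_ext => // r0 /=; case: eqP.
left; apply: mem_ext => // r0 /=.
by have [->|] := eqVneq r0 r'; [rewrite (negbTE ne)|case: eqP].
Qed.

Lemma write_invisible_wrn m r v w i v' : invisible m (OWrite r v) (OWRN w i v').
Proof. by split; [left|]. Qed.

Lemma wrn_invisible_wrn m w (i : 'I_k) v w' (j : 'I_k) v' :
  (w' != w) || (j.+1 %% k != i) -> invisible m (OWRN w i v) (OWRN w' j v').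
Proof.
move=> unread_i; split; last first.
  by move: unread_i => /=; case: (w' == w) => //= /negbTE ->.
have [same_cell|other_cell] := boolP ((w' == w) && (nat_of_ord j == i)).
  right; case/andP: same_cell => /eqP-> /eqP eq_ji; apply: mem_ext => // w0 j0 /=.
  by rewrite eq_ji; case: (_ && _).
left; apply: mem_ext => // w0 j0 /=.
case: ifP => [/andP[/eqP-> /eqP->]|_]; last by case: ifP.
by rewrite (negbTE other_cell).
Qed.

Lemma invisible_either m o o' : 2 < k -> invisible m o o' \/ invisible m o' o.
Proof.
move=> k_gt2; case: o => [r|r v|w i v]; first by left; apply: read_invisible.
  case: o' => [r'|r' v'|w' j v']; first by right; apply: read_invisible.
    by left; apply: write_invisible_write.
  by left; apply: write_invisible_wrn.
case: o' => [r'|r' v'|w' j v']; first by right; apply: read_invisible.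
  by right; apply: write_invisible_wrn.
have [succ_j|ne_i] := eqVneq (j.+1 %% k) i.
  by right; apply: wrn_invisible_wrn; rewrite succ_mod_asym ?orbT.
by left; apply: wrn_invisible_wrn; rewrite ne_i orbT.
Qed.

End Memory.

Section Executions.
Variables (k : nat) (I : Type) (A : algorithm k I).
Implicit Types (c : config A) (l : seq 'I_2).

Definition exec c l : config A := foldl (@step _ _ A) c l.

Lemma exec_cat c l1 l2 : exec c (l1 ++ l2) = exec (exec c l1) l2.
Proof. exact: foldl_cat. Qed.

Lemma run_exec inputs sched t :
  run A inputs sched t = exec (init_config A inputs) (mkseq sched t).
Proof. by elim: t => // t IHt; rewrite mkseqS -cats1 exec_cat -IHt. Qed.

Lemma decided_step c p q o : decided c p o -> decided (step c q) p o.
Proof.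
rewrite /decided /step => dec_p; case act_q: (act q _) => [|?] //.
by case: (apply_op _ _) => m r /=; case: eqP => // eq_pq; rewrite eq_pq act_q in dec_p.
Qed.

Lemma decided_exec c l p o : decided c p o -> decided (exec c l) p o.
Proof. by elim: l c => //= q l IHl c /(decided_step q)/IHl. Qed.

Lemma step_pending c p o : act p (locs c p) = inr o ->
  [/\ cmem (step c p) = (apply_op (cmem c) o).1,
      locs (step c p) p = Defs.next p (locs c p) (apply_op (cmem c) o).2 &
      forall q, q != p -> locs (step c p) q = locs c q].
Proof.
by rewrite /step => ->; case: (apply_op _ _) => m r /=; rewrite eqxx; split=> // q /negbTE ->.
Qed.

Lemma exec_solo_congr c c' p n :
  locs c p = locs c' p -> cmem c = cmem c' ->
  locs (exec c (nseq n p)) p = locs (exec c' (nseq n p)) p /\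
  cmem (exec c (nseq n p)) = cmem (exec c' (nseq n p)).
Proof.
elim: n c c' => //= n IHn c c' eq_loc eq_mem; apply: IHn; rewrite /step -eq_loc;
  case: (act _ _) => // o; rewrite -eq_mem; case: (apply_op _ _) => m r /=; by rewrite ?eqxx.
Qed.

Lemma decided_run_monotone inputs sched t t' p o : t <= t' ->
  decided (run A inputs sched t) p o -> decided (run A inputs sched t') p o.
Proof.
move=> /subnK <-; elim: (t' - t) => //= d IHd /IHd; exact: decided_step.
Qed.

End Executions.

Section Consensus.
Variables (k : nat) (I : Type) (A : algorithm k I).
Hypothesis solvesA : solves_consensus A.
Implicit Types (l : seq 'I_2).

Lemma run_then_solo inputs l p n :
  run A inputs (nth p l) (size l + n) = exec (exec (init_config A inputs) l) (nseq n p).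
Proof. by rewrite run_exec mkseq_nth_nseq exec_cat. Qed.

Lemma exec_init_run inputs l p :
  exec (init_config A inputs) l = run A inputs (nth p l) (size l).
Proof. by rewrite -[size l]addn0 run_then_solo. Qed.

Lemma exec_solo_decides inputs l p :
  exists n o, decided (exec (exec (init_config A inputs) l) (nseq n p)) p o.
Proof.
have [wait_free _] := solvesA inputs (nth p l).
have [|t [o dec_t]] := wait_free p.
  move=> t; exists (t + size l); split; first exact: leq_addr.
  by rewrite nth_default // leq_addl.
by exists t, o; rewrite -run_then_solo; apply: decided_run_monotone dec_t; rewrite leq_addl.
Qed.

Lemma agreement_exec inputs l p q o o' :
  decided (exec (init_config A inputs) l) p o ->
  decided (exec (init_config A inputs) l) q o' -> o = o'.
Proof.
have [_ [agree _]] := solvesA inputs (nth p l).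
by rewrite (exec_init_run _ _ p); apply: agree.
Qed.

Lemma validity_exec inputs l p o :
  decided (exec (init_config A inputs) l) p o -> exists q, o = inputs q.
Proof.
have [_ [_ valid]] := solvesA inputs (nth p l).
by rewrite (exec_init_run _ _ p); apply: valid.
Qed.

End Consensus.

Section Valency.
Variables (k : nat) (I : Type) (A : algorithm k I).
Hypothesis solvesA : solves_consensus A.
Variable inputs : 'I_2 -> I.
Implicit Types (c : config A) (l : seq 'I_2).

Definition reachable c := exists l, c = exec (init_config A inputs) l.

Definition can_decide c o := exists l p, decided (exec c l) p o.

Definition bivalent c := exists o o', [/\ o <> o', can_decide c o & can_decide c o'].

Lemma reachable_exec c l : reachable c -> reachable (exec c l).
Proof. by case=> l0 ->; exists (l0 ++ l); rewrite exec_cat. Qed.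

Lemma reachable_run sched t : reachable (run A inputs sched t).
Proof. by exists (mkseq sched t); rewrite run_exec. Qed.

Lemma reachable_solo_decides c p :
  reachable c -> exists n o, decided (exec c (nseq n p)) p o.
Proof. by case=> l ->; apply: exec_solo_decides. Qed.

Lemma decided_can_decide c p o o' :
  reachable c -> decided c p o -> can_decide c o' -> o' = o.
Proof.
case=> l -> dec_p [l' [q dec_q]].
rewrite -exec_cat in dec_q; apply: (agreement_exec solvesA) dec_q _.
by rewrite exec_cat; apply: decided_exec dec_p.
Qed.

Lemma decided_not_bivalent c p o : reachable c -> decided c p o -> ~ bivalent c.
Proof.
move=> reach_c dec_p [v [w [ne_vw can_v can_w]]]; apply: ne_vw.
by rewrite (decided_can_decide reach_c dec_p can_v) (decided_can_decide reach_c dec_p can_w).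
Qed.

Lemma not_bivalent_can_decide c o o' :
  ~ bivalent c -> can_decide c o -> can_decide c o' -> o = o'.
Proof. by move=> not_biv can_o can_o'; apply: NNPP => ne; apply: not_biv; exists o, o'. Qed.

Lemma bivalent_pending c p :
  reachable c -> bivalent c -> exists o, act p (locs c p) = inr o.
Proof.
move=> reach_c biv_c; case act_p: (act p _) => [o|o]; last by exists o.
by case: (decided_not_bivalent reach_c act_p biv_c).
Qed.

Lemma bivalent_can_decide_step c o : reachable c -> bivalent c ->
  can_decide c o -> exists p, can_decide (step c p) o.
Proof.
move=> reach_c biv_c [[|p l] [q dec_q]]; last by exists p, l, q.
by case: (decided_not_bivalent reach_c dec_q biv_c).
Qed.

Lemma init_can_decide_input p : can_decide (init_config A inputs) (inputs p).
Proof.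
have [n [o dec_solo]] := exec_solo_decides solvesA (fun=> inputs p) [::] p.
have [q eq_o] := validity_exec solvesA dec_solo; rewrite {}eq_o in dec_solo.
have [same_loc _] := @exec_solo_congr _ _ _ (init_config A (fun=> inputs p))
  (init_config A inputs) p n erefl erefl.
by exists (nseq n p), p; move: dec_solo; rewrite /decided /= same_loc.
Qed.

Lemma bivalent_init p q : inputs p <> inputs q -> bivalent (init_config A inputs).
Proof. by exists (inputs p), (inputs q); split=> //; apply: init_can_decide_input. Qed.

Lemma invisible_common_can_decide c x y ox oy : x != y ->
  act x (locs c x) = inr ox -> act y (locs c y) = inr oy ->
  invisible (cmem c) ox oy -> reachable c ->
  exists o, can_decide (step c x) o /\ can_decide (step c y) o.
Proof.
move=> ne_xy act_x act_y [mem_xy resp_y] reach_c.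
have ne_yx : y != x by rewrite eq_sym.
have [mem_x _ other_x] := step_pending act_x.
have [mem_y loc_y other_y] := step_pending act_y.
have act_y_x : act y (locs (step c x) y) = inr oy by rewrite other_x.
have act_x_y : act x (locs (step c y) x) = inr ox by rewrite other_y.
have [mem_xy' loc_xy' _] := step_pending act_y_x.
have [mem_yx' _ other_yx] := step_pending act_x_y.
have same_loc : locs (step (step c x) y) y = locs (step c y) y.
  by rewrite loc_xy' loc_y other_x // mem_x resp_y.
have [l [same_loc_l same_mem_l]] : exists l,
    locs (step (step c x) y) y = locs (exec (step c y) l) y /\
    cmem (step (step c x) y) = cmem (exec (step c y) l).
  case: mem_xy => [commute|overwrite].
    exists [:: x]; rewrite /= other_yx // same_loc; split=> //.
    by rewrite mem_xy' mem_x commute mem_yx' mem_y.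
  by exists [::]; rewrite mem_xy' mem_x overwrite mem_y.
have reach_xy : reachable (step (step c x) y) := reachable_exec [:: x; y] reach_c.
have [n [o dec_o]] := reachable_solo_decides y reach_xy.
have [same_loc_n _] := exec_solo_congr n same_loc_l same_mem_l.
exists o; split; first by exists (y :: nseq n y), y.
by exists (l ++ nseq n y), y; rewrite exec_cat; move: dec_o; rewrite /decided same_loc_n.
Qed.

Hypothesis k_gt2 : 2 < k.

Lemma bivalent_step c : reachable c -> bivalent c -> exists p, bivalent (step c p).
Proof.
move=> reach_c biv_c; apply: NNPP => no_biv_step.
have univalent p : ~ bivalent (step c p) by move=> biv_p; apply: no_biv_step; exists p.
have [o0 act0] := bivalent_pending ord0 reach_c biv_c.
have [o1 act1] := bivalent_pending ord_max reach_c biv_c.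
have [o [can0 can1]] :
    exists o, can_decide (step c ord0) o /\ can_decide (step c ord_max) o.
  have [inv|inv] := invisible_either (cmem c) o0 o1 k_gt2.
    exact: invisible_common_can_decide act0 act1 inv reach_c.
  have [o [can1 can0]] :=
    invisible_common_can_decide (x := ord_max) (y := ord0) isT act1 act0 inv reach_c.
  by exists o.
have only_o o' : can_decide c o' -> o' = o.
  case/(bivalent_can_decide_step reach_c biv_c) => p; case: (ord2P p) => -> can_p.
    exact: not_bivalent_can_decide (univalent _) can_p can0.
  exact: not_bivalent_can_decide (univalent _) can_p can1.
by case: biv_c => v [w [ne_vw /only_o eq_v /only_o eq_w]]; rewrite eq_v eq_w in ne_vw.
Qed.

Lemma bivalent_schedule : bivalent (init_config A inputs) ->
  exists sched, forall t, bivalent (run A inputs sched t).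
Proof.
move=> biv_init.
have choose_step c : {p | reachable c -> bivalent c -> bivalent (step c p)}.
  apply: constructive_indefinite_description.
  have [[reach_c biv_c]|not_rb] := classic (reachable c /\ bivalent c).
    by have [p biv_p] := bivalent_step reach_c biv_c; exists p.
  by exists ord0 => reach_c biv_c; case: not_rb.
pose next_p c := sval (choose_step c).
pose sched t := next_p (iter t (fun c => step c (next_p c)) (init_config A inputs)).
have run_iter t :
    run A inputs sched t = iter t (fun c => step c (next_p c)) (init_config A inputs).
  by elim: t => //= t ->.
exists sched; elim=> [//|t IHt]; rewrite run_iter /= -run_iter.
exact: (svalP (choose_step _)) (reachable_run _ _) IHt.
Qed.

End Valency.

Lemma infinitely_often_exists (T : finType) (s : nat -> T) :
  exists x, forall t, exists t', t <= t' /\ s t' = x.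
Proof.
apply: NNPP => none.
have bound x : {t | forall t', t <= t' -> s t' != x}.
  apply: constructive_indefinite_description; apply: NNPP => unbounded.
  apply: none; exists x => t; apply: NNPP => not_after; apply: unbounded.
  by exists t => t' le_tt'; apply/eqP => eq_x; apply: not_after; exists t'.
pose t := \max_x sval (bound x).
by have /eqP := svalP (bound (s t)) t (leq_bigmax (s t)).
Qed.

Theorem lemma1 (k : nat) (hk : 3 <= k) (I : Type) (a b : I) (hab : a <> b) :
  ~ exists A : algorithm k I, solves_consensus A.
Proof.
case=> A solvesA.
pose inputs (p : 'I_2) := if p == ord0 then a else b.
have biv_init := @bivalent_init _ _ A solvesA inputs ord0 ord_max hab.
have [sched biv_run] := bivalent_schedule solvesA hk biv_init.
have [p often_p] := infinitely_often_exists sched.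
have [wait_free _] := solvesA inputs sched.
have [t [o dec_t]] := wait_free p often_p.
exact: (decided_not_bivalent solvesA (reachable_run A inputs sched t) dec_t (biv_run t)).
Qed.
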